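(* Let $v:\mathcal{X}\times\{\theta_1,\ldots,\theta_M\}\to[0,\infty)$ be measurable with ${\rm E}\big[\sum_{i=1}^M P(\theta_i|\mathbf{x})\,v(\mathbf{x},\theta_i)\big]<\infty$. Then the quantity ${\rm E}\big[u_{\hat\theta}(\mathbf{x},\theta)\,v(\mathbf{x},\theta)\big]$ takes the same value for every detector $\hat\theta$ if and only if there exists a measurable function $\zeta:\mathcal{X}\to[0,\infty)$ such that, for almost every $\mathbf{x}$, $$v(\mathbf{x},\theta_i)=\frac{\zeta(\mathbf{x})}{P(\theta_i|\mathbf{x})},\qquad i=1,\ldots,M .$$ In that case ${\rm E}[u_{\hat\theta}(\mathbf{x},\theta)v(\mathbf{x},\theta)]=(M-1)\,{\rm E}[\zeta(\mathbf{x})]$ for every detector $\hat\theta$.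
   Context: $M$-ary hypothesis testing: the true hypothesis $\theta$ is a random variable taking values in $\{\theta_1,\ldots,\theta_M\}$ with prior probabilities $P(\theta_i)$, and $\mathbf{x}$ is a random observation with values in a measurable space $\mathcal{X}$. $P(\theta_i|\mathbf{x})$ denotes the posterior probability of $\theta_i$ given $\mathbf{x}$; it is assumed that $P(\theta_i|\mathbf{x})>0$ for all $\mathbf{x}$ and all $i$. A detector is a measurable map $\hat\theta:\mathcal{X}\to\{\theta_1,\ldots,\theta_M\}$. For a detector $\hat\theta$, $u_{\hat\theta}(\mathbf{x},\theta)=\mathbf{1}_{\hat\theta(\mathbf{x})\neq\theta}$ (equal to $1$ if $\hat\theta(\mathbf{x})\neq\theta$ and $0$ otherwise). All expectations are with respect to the joint law of $(\mathbf{x},\theta)$. *)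

From HB Require Import structures.
From mathcomp Require Import all_boot all_order all_algebra.
From mathcomp Require Import all_classical all_reals all_analysis.
Set Implicit Arguments. Unset Strict Implicit. Unset Printing Implicit Defensive.
Import Order.TTheory GRing.Theory Num.Theory.
Local Open Scope ring_scope.
Local Open Scope classical_set_scope.

(* Model of M-ary hypothesis testing: hypotheses theta_1..theta_M are indexed by
   'I_M; mu is the law (marginal) of the observation x on T; p x i is the
   posterior P(theta_i | x).  The joint law of (x, theta) is
     E[f(x,theta)] = \int[mu]_x \sum_i p x i * f x i. *)

Definition detector (d0 : measure_display) (T : measurableType d0)
  (M : nat) (dt : T -> 'I_M) : Prop :=
  forall i : 'I_M, measurable [set x | dt x = i].

(* E[ u_dt(x,theta) v(x,theta) ] with u_dt(x,theta) = 1_{dt x <> theta}. *)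
Definition weighted_risk (R : realType) (d0 : measure_display) (T : measurableType d0)
  (M : nat) (mu : probability T R) (p v : T -> 'I_M -> R) (dt : T -> 'I_M) : \bar R :=
  (\int[mu]_x (\sum_(i < M) p x i * (dt x != i)%:R * v x i)%:E)%E.

From HB Require Import structures.
From mathcomp Require Import all_boot all_order all_algebra.
From mathcomp Require Import all_classical all_reals all_analysis.
From mathcomp Require Import measurable_realfun.
Set Implicit Arguments. Unset Strict Implicit. Unset Printing Implicit Defensive.
Import Order.TTheory GRing.Theory Num.Theory.
Local Open Scope ring_scope.
Local Open Scope classical_set_scope.

(* Write w_i x := P(theta_i|x) v(x,theta_i) and S := sum_i w_i, which is integrable.
   The risk of a detector d is E[S] - E[w_(d x) x], so it is independent of d iff
   E[w_(d x) x] is.  In that case, for any j and k the detector choosing the larger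
   (resp. smaller) of w_j, w_k has the same integral as the constant detector j
   while its integrand is pointwise above (resp. below) w_j; hence w_j = w_k a.e.
   and zeta := w_j works.  Conversely, if w_i = zeta a.e. for every i, the risk
   integrand is (M - 1) zeta a.e. *)

Lemma sumr_eq_indicator (R : pzSemiRingType) (M : nat) (d : 'I_M) (w : 'I_M -> R) :
  \sum_(i < M) (d == i)%:R * w i = w d.
Proof.
rewrite (bigD1 d) //= eqxx mul1r big1 ?addr0 // => i /negPf.
by rewrite eq_sym => ->; rewrite mul0r.
Qed.

Lemma sumr_ord_neq (R : pzRingType) (M : nat) (d : 'I_M) :
  \sum_(i < M) ((d != i)%:R : R) = (M - 1)%:R.
Proof.
rewrite (eq_bigr (fun i => 1 - (d == i)%:R * 1)) => [|i _]; last first.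
  by case: (d == i); rewrite /= ?mulr1 ?subrr ?subr0.
rewrite sumrB sumr_eq_indicator sumr_const card_ord.
by rewrite natrB // (leq_ltn_trans _ (ltn_ord d)).
Qed.

Lemma sumr_neq_mulE (R : comPzRingType) (M : nat) (d : 'I_M) (p v : 'I_M -> R) :
  \sum_(i < M) p i * (d != i)%:R * v i = \sum_(i < M) p i * v i - p d * v d.
Proof.
rewrite [in RHS](bigD1 d) //= addrAC subrr add0r (bigD1 d) //= eqxx mulr0 mul0r add0r.
by apply: eq_bigr => i; rewrite eq_sym => ->; rewrite mulr1.
Qed.

Lemma detector_cst (d0 : measure_display) (T : measurableType d0) (M : nat)
  (j : 'I_M) : detector (fun _ : T => j).
Proof.
move=> i; have [->|/eqP ji] := eqVneq j i.
  by rewrite (_ : [set _ | _] = setT) //; apply/seteqP; split.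
by rewrite (_ : [set _ | _] = set0) //; apply/seteqP; split.
Qed.

Lemma detector_if (d0 : measure_display) (T : measurableType d0) (M : nat)
  (b : T -> bool) (j k : 'I_M) : measurable_fun setT b ->
  detector (fun x => if b x then j else k).
Proof.
(* every subset of [bool] is measurable *)
move=> /(_ measurableT [set true]); rewrite setTI => /(_ I) mb i.
rewrite (_ : [set x | _ = i] = ([set x | b x] `&` [set _ | j = i]) `|`
                               (~` [set x | b x] `&` [set _ | k = i])).
  by apply: measurableU; apply: measurableI => //;
    [exact: detector_cst | exact: measurableC | exact: detector_cst].
apply/seteqP; split => x /=; case: (b x) => //.
- by left.
- by right.
- by case=> -[].
- by case=> -[].
Qed.

Lemma measurable_fun_detector (d0 : measure_display) (T : measurableType d0)
  (R : realType) (M : nat) (dt : T -> 'I_M) (f : 'I_M -> T -> R) :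
  detector dt -> (forall i, measurable_fun setT (f i)) ->
  measurable_fun setT (fun x => f (dt x) x).
Proof.
move=> hdt mf.
have -> : (fun x => f (dt x) x) =
    (fun x => \sum_(i < M) \1_[set x | dt x = i] x * f i x).
  apply/funext => x; rewrite -[LHS](sumr_eq_indicator (dt x) (f^~ x)).
  apply: eq_bigr => i _.
  rewrite indicE; have [<-|ne] := eqVneq (dt x) i.
    by rewrite mem_set.
  by rewrite memNset //; apply/eqP.
by apply: measurable_sum => i; apply: measurable_funM.
Qed.

Lemma ae_eq_integral_le (d : measure_display) (T : measurableType d)
  (R : realType) (mu : {measure set T -> \bar R}) (f g : T -> R) :
  mu.-integrable setT (EFin \o f) -> measurable_fun setT g ->
  (forall x, 0 <= g x <= f x) ->
  (\int[mu]_x (f x)%:E = \int[mu]_x (g x)%:E)%E -> {ae mu, forall x, f x = g x}.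
Proof.
move=> intf mg gf fg.
have intg : mu.-integrable setT (EFin \o g).
  apply: le_integrable intf => //; first exact/measurable_EFinP.
  move=> x _ /=; have /andP[g0 gle] := gf x.
  by rewrite !ger0_norm // (le_trans g0).
have mfg : measurable_fun setT (fun x => (f x - g x)%:E).
  apply/measurable_EFinP/measurable_funB => //.
  by apply/measurable_EFinP; exact: measurable_int intf.
suff : (\int[mu]_x `|(f x - g x)%:E| = 0)%E.
  move/(ae_eq_integral_abs mu measurableT mfg); apply: filterS => x /(_ I) [].
  by move/eqP; rewrite subr_eq0 => /eqP.
transitivity (\int[mu]_x ((f x)%:E - (g x)%:E))%E.
  apply: eq_integral => x _; have /andP[_ gle] := gf x.
  by rewrite gee0_abs ?lee_fin ?subr_ge0 // EFinB.
by rewrite integralB_EFin // fg subee // (integrable_fin_num measurableT intg).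
Qed.

Section posterior_weighted_risk.
Variables (R : realType) (d0 : measure_display) (T : measurableType d0) (M : nat).
Variables (mu : probability T R) (p v : T -> 'I_M -> R).
Hypothesis p_meas : forall i, measurable_fun setT (fun x => p x i).
Hypothesis p_pos : forall x i, 0 < p x i.
Hypothesis v_meas : forall i, measurable_fun setT (fun x => v x i).
Hypothesis v_ge0 : forall x i, 0 <= v x i.
Hypothesis v_int : (\int[mu]_x (\sum_(i < M) p x i * v x i)%:E < +oo)%E.

Let w i x := p x i * v x i.
Let S x := \sum_(i < M) w i x.

Let w_ge0 i x : 0 <= w i x.
Proof. by apply: mulr_ge0 => //; exact: ltW. Qed.

Let w_le_S i x : w i x <= S x.
Proof. by rewrite /S (bigD1 i) //= lerDl sumr_ge0. Qed.

Let measurable_w i : measurable_fun setT (w i).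
Proof. exact: measurable_funM. Qed.

Let integrable_S : mu.-integrable setT (EFin \o S).
Proof.
apply/integrableP; split; first exact/measurable_EFinP/measurable_sum.
apply: le_lt_trans v_int; rewrite le_eqVlt; apply/orP; left; apply/eqP.
by apply: eq_integral => x _ /=; rewrite ger0_norm // sumr_ge0.
Qed.

Let integrable_detector_weight dt : detector dt ->
  mu.-integrable setT (EFin \o (fun x => w (dt x) x)).
Proof.
move=> hdt; apply: le_integrable integrable_S => //.
  exact/measurable_EFinP/measurable_fun_detector.
by move=> x _ /=; rewrite !ger0_norm ?lee_fin ?w_le_S // (le_trans (w_ge0 (dt x) x)).
Qed.

Lemma weighted_riskE dt : detector dt -> weighted_risk mu p v dt =
  (\int[mu]_x (S x)%:E - \int[mu]_x (w (dt x) x)%:E)%E.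
Proof.
move=> hdt; rewrite /weighted_risk -integralB_EFin //.
  by apply: eq_integral => x _; rewrite sumr_neq_mulE.
exact: integrable_detector_weight.
Qed.

Lemma detector_weight_integral_eq d1 d2 : detector d1 -> detector d2 ->
  weighted_risk mu p v d1 = weighted_risk mu p v d2 ->
  (\int[mu]_x (w (d1 x) x)%:E = \int[mu]_x (w (d2 x) x)%:E)%E.
Proof.
move=> h1 h2; rewrite (weighted_riskE h1) (weighted_riskE h2).
have finS := integrable_fin_num measurableT integrable_S.
have fin1 := integrable_fin_num measurableT (integrable_detector_weight h1).
have fin2 := integrable_fin_num measurableT (integrable_detector_weight h2).
by rewrite -(fineK finS) -(fineK fin1) -(fineK fin2) -!EFinB => -[] /addrI /oppr_inj ->.
Qed.

Lemma constant_risk_ae_weight_eq (c : \bar R) :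
  (forall dt, detector dt -> weighted_risk mu p v dt = c) ->
  forall j k, {ae mu, forall x, p x j * v x j = p x k * v x k}.
Proof.
move=> hc j k.
pose dmax x := if w j x < w k x then k else j.
pose dmin x := if w k x < w j x then k else j.
have hmax : detector dmax by apply/detector_if/measurable_fun_ltr.
have hmin : detector dmin by apply/detector_if/measurable_fun_ltr.
have hj : detector (fun _ => j) := detector_cst T j.
have eq_risk d1 d2 : detector d1 -> detector d2 ->
    weighted_risk mu p v d1 = weighted_risk mu p v d2.
  by move=> /hc -> /hc ->.
have ae_max : {ae mu, forall x, w (dmax x) x = w j x}.
  apply: ae_eq_integral_le; first exact: integrable_detector_weight.
  - exact: measurable_w.
  - by move=> x; rewrite w_ge0 /dmax /=; case: ltP => // /ltW.
  - exact: detector_weight_integral_eq (eq_risk _ _ hmax hj).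
have ae_min : {ae mu, forall x, w j x = w (dmin x) x}.
  apply: ae_eq_integral_le; first exact: integrable_detector_weight.
  - exact: measurable_fun_detector.
  - by move=> x; rewrite w_ge0 /dmin /=; case: ltP => // /ltW.
  - exact: detector_weight_integral_eq (eq_risk _ _ hj hmin).
apply: filterS2 ae_max ae_min => x; rewrite /dmax /dmin.
by case: ltgtP => // _ -> //= <-.
Qed.

Lemma weighted_risk_posterior_form (zeta : T -> R) :
  measurable_fun setT zeta -> (forall x, 0 <= zeta x) ->
  {ae mu, forall x i, v x i = zeta x / p x i} ->
  forall dt, detector dt ->
  (weighted_risk mu p v dt = ((M - 1)%:R)%:E * \int[mu]_x (zeta x)%:E)%E.
Proof.
move=> mz z0 hae dt hdt.
transitivity (\int[mu]_x ((M - 1)%:R%:E * (zeta x)%:E))%E; last first.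
  rewrite ge0_integralZl_EFin //; last exact/measurable_EFinP.
  by move=> x _; rewrite lee_fin.
rewrite /weighted_risk; apply: ae_eq_integral => //.
- under eq_fun do rewrite sumr_neq_mulE.
  apply/measurable_EFinP/measurable_funB; first exact: measurable_sum.
  exact: (measurable_fun_detector (f := w) hdt measurable_w).
- by apply/measurable_EFinP/measurable_funM.
apply: filterS hae => x vE _; rewrite -EFinM; congr EFin.
rewrite (eq_bigr (fun i => (dt x != i)%:R * zeta x)) => [|i _]; last first.
  by rewrite vE mulrAC [p x i * _]mulrCA mulfV ?mulr1 1?mulrC // lt0r_neq0.
by rewrite -mulr_suml sumr_ord_neq.
Qed.

Lemma constant_risk_posterior_form (c : \bar R) (j : 'I_M) :
  (forall dt, detector dt -> weighted_risk mu p v dt = c) ->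
  {ae mu, forall x i, v x i = p x j * v x j / p x i}.
Proof.
move=> hc; apply: filterS (filter_forall _ (constant_risk_ae_weight_eq hc j)).
by move=> x wE i; rewrite (wE i) mulrC mulKf // lt0r_neq0.
Qed.
End posterior_weighted_risk.

Theorem theorem1 (R : realType) (d0 : measure_display) (T : measurableType d0)
  (M : nat) (mu : probability T R) (p v : T -> 'I_M -> R)
  (p_meas : forall i : 'I_M, measurable_fun setT (fun x => p x i))
  (p_pos : forall x i, 0 < p x i)
  (p_sum1 : forall x, \sum_(i < M) p x i = 1)
  (v_meas : forall i : 'I_M, measurable_fun setT (fun x => v x i))
  (v_ge0 : forall x i, 0 <= v x i)
  (v_int : (\int[mu]_x (\sum_(i < M) p x i * v x i)%:E < +oo)%E) :
  ((exists c : \bar R, forall dt : T -> 'I_M, detector dt ->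
       weighted_risk mu p v dt = c)
   <->
   (exists zeta : T -> R, measurable_fun setT zeta /\ (forall x, 0 <= zeta x) /\
       {ae mu, forall x, forall i : 'I_M, v x i = zeta x / p x i}))
  /\
  (forall zeta : T -> R, measurable_fun setT zeta -> (forall x, 0 <= zeta x) ->
     {ae mu, forall x, forall i : 'I_M, v x i = zeta x / p x i} ->
     forall dt : T -> 'I_M, detector dt ->
       (weighted_risk mu p v dt = ((M - 1)%:R)%:E * \int[mu]_x (zeta x)%:E)%E).
Proof.
have [x0 _] : [set: T] !=set0.
  apply/set0P/negP => /eqP T0; have := probability_setT mu.
  by rewrite T0 measure0 => /esym/eqP; rewrite onee_eq0.
have j0 : 'I_M.
  have [M0|M_gt0] := posnP M; last exact: Ordinal M_gt0.
  by move: (p_sum1 x0); subst M; rewrite big_ord0 => /esym/eqP; rewrite oner_eq0.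
split; last exact: (weighted_risk_posterior_form p_meas p_pos v_meas).
split=> [[c hc] | [zeta [mz [z0 hae]]]].
- exists (fun x => p x j0 * v x j0); split; first exact: measurable_funM.
  split; first by move=> x; rewrite mulr_ge0 // ltW.
  exact: (constant_risk_posterior_form p_meas p_pos v_meas v_ge0 v_int j0 hc).
- eexists => dt.
  exact: (weighted_risk_posterior_form p_meas p_pos v_meas mz z0 hae).
Qed.
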